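(* Let $m\ge3$ be odd and let $\bm d=(d_1,d_2,d_3)\in\mathcal{S}_1^3$, i.e. each $d_i$ is odd and squarefree. Then $\theta(O^+(X^{\bm d}_2))=\mathbb{Z}_2(\mathbb{Q}_2^\times)^2$, where $\mathbb{Z}_2(\mathbb{Q}_2^\times)^2$ denotes the set $\{as^2: a\in\mathbb{Z}_2\setminus\{0\},\ s\in\mathbb{Q}_2^\times\}$.
   Context: $V$ is the positive definite ternary quadratic space over $\mathbb{Q}$ with basis $e_1,e_2,e_3$ and bilinear form $B(e_i,e_j)=4(m-2)^2\delta_{ij}$, $Q(x)=B(x,x)$. For $\bm d\in\mathbb{N}^3$, $L^{\bm d}=\mathbb{Z}d_1e_1+\mathbb{Z}d_2e_2+\mathbb{Z}d_3e_3$, $\nu=\frac{4-m}{2(m-2)}(e_1+e_2+e_3)$ and $X^{\bm d}=L^{\bm d}+\nu$. $V_2=V\otimes\mathbb{Q}_2$, $X^{\bm d}_2=L^{\bm d}\otimes\mathbb{Z}_2+\nu$, $O^+(X^{\bm d}_2)=\{\sigma\in O^+(V_2):\sigma(X^{\bm d}_2)=X^{\bm d}_2\}$, and $\theta$ is the spinor norm $O^+(V_2)\to\mathbb{Q}_2^\times/(\mathbb{Q}_2^\times)^2$, with $\theta(O^+(X^{\bm d}_2))$ identified with its preimage in $\mathbb{Q}_2^\times$. *)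

From mathcomp Require Import all_boot all_order all_algebra.
Set Implicit Arguments. Unset Strict Implicit. Unset Printing Implicit Defensive.
Import Order.TTheory GRing.Theory Num.Theory.
Local Open Scope ring_scope.

(* The field Q_2, characterised up to isomorphism: a field F with a   *)
(* discrete valuation v (meaningful on nonzero elements) with v 2 = 1, *)
(* in which Q is dense and which is complete.  Such an F is the        *)
(* completion of Q for the 2-adic valuation, i.e. F is (isomorphic to) *)
(* Q_2 as a valued field.                                              *)
Record is_Q2 (F : fieldType) (v : F -> int) : Prop := {
  v_mul : forall x y : F, x != 0 -> y != 0 -> v (x * y) = v x + v y;
  v_add : forall x y : F, x != 0 -> y != 0 -> x + y != 0 ->
            Num.min (v x) (v y) <= v (x + y);
  v_two : v 2 = 1;
  v_dense : forall (x : F) (n : int), exists q : rat,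
            x - ratr q = 0 \/ n <= v (x - ratr q);
  v_complete : forall u : nat -> F,
     (forall n : int, exists N : nat, forall i j : nat, (N <= i)%N -> (N <= j)%N ->
          u i - u j = 0 \/ n <= v (u i - u j)) ->
     exists l : F, forall n : int, exists N : nat, forall i : nat, (N <= i)%N ->
          u i - l = 0 \/ n <= v (u i - l)
}.

Definition inZ2 (F : fieldType) (v : F -> int) (x : F) : Prop := x = 0 \/ 0 <= v x.

Definition squarefree (n : nat) : Prop := forall p : nat, prime p -> ~~ (p * p %| n)%N.

Definition B (F : fieldType) (m : nat) (x y : 'rV[F]_3) : F :=
  (4 * (m%:R - 2) ^+ 2) * (x *m y^T) 0 0.

Definition Qf (F : fieldType) (m : nat) (x : 'rV[F]_3) : F := B m x x.

Definition refl (F : fieldType) (m : nat) (u x : 'rV[F]_3) : 'rV[F]_3 :=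
  x - (2 * B m x u / Qf m u) *: u.

Definition refl_prod (F : fieldType) (m : nat) (us : seq 'rV[F]_3) : 'rV[F]_3 -> 'rV[F]_3 :=
  foldr (fun u f => refl m u \o f) id us.

(* nu = (4-m)/(2(m-2)) (e_1+e_2+e_3) : its common coordinate *)
Definition nu0 (F : fieldType) (m : nat) : F :=
  ((4%:Z - m%:Z)%:~R) / (2 * (m%:R - 2)).

(* X^d_2 = L^d (x) Z_2 + nu *)
Definition inX2 (F : fieldType) (v : F -> int) (m : nat) (d : 'I_3 -> nat)
    (x : 'rV[F]_3) : Prop :=
  forall i : 'I_3, exists a : F, inZ2 v a /\ x 0 i = a * (d i)%:R + nu0 F m.

(* theta(O^+(X^d_2)), as a subset of Q_2^x (preimage of the image in
   Q_2^x/(Q_2^x)^2).  Every element of O^+(V_2) is a product of an even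
   number of reflections (Cartan-Dieudonne) and conversely, and the spinor
   norm of tau_{u_1}...tau_{u_r} is Q(u_1)...Q(u_r) mod squares. *)
Definition theta_OX (F : fieldType) (v : F -> int) (m : nat) (d : 'I_3 -> nat)
    (a : F) : Prop :=
  a != 0 /\
  exists us : seq 'rV[F]_3,
    [/\ all (fun u => Qf m u != 0) us,
        ~~ odd (size us),
        (forall y, inX2 v m d y <->
             exists x, inX2 v m d x /\ refl_prod m us x = y) &
        exists s : F, s != 0 /\ a = s ^+ 2 * \prod_(u <- us) Qf m u].

Definition Z2_sq (F : fieldType) (v : F -> int) (b : F) : Prop :=
  exists a s : F, [/\ inZ2 v a, a != 0, s != 0 & b = a * s ^+ 2].

(* The spinor norm of a product of two reflections tau_u tau_w is Q(u) Q(w).  Since the d_i are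
   odd, they are 2-adic units and X^d_2 = nu + Z_2^3; since m is odd, 2 nu lies in Z_2.  Hence
   tau_u preserves X^d_2 whenever u is integral and 2 / |u|^2 and (u_1 + u_2 + u_3) / |u|^2 are
   2-adic integers.  Pairing e_1 with (1,1,1), (1,2,0) and (1,1,0) gives the spinor norms 3, 5
   and 2.  By Hensel's lemma a unit congruent to 1 mod 8 is a square, so every unit is a square
   times 1, 3, 5 or 15; together with 2 this exhausts Q_2^x, which is also Z_2 (Q_2^x)^2. *)

From mathcomp Require Import all_boot all_order all_algebra.
From mathcomp Require Import zify ring.
Set Implicit Arguments. Unset Strict Implicit. Unset Printing Implicit Defensive.
Import Order.TTheory GRing.Theory Num.Theory.
Local Open Scope ring_scope.

Definition stabilizes (T : Type) (X : T -> Prop) (f : T -> T) : Prop :=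
  forall y, X y <-> exists x, X x /\ f x = y.

Lemma stabilizes_comp (T : Type) (X : T -> Prop) (f g : T -> T) :
  stabilizes X f -> stabilizes X g -> stabilizes X (f \o g).
Proof.
move=> Xf Xg y; split; first by move=> /Xf [_ [/Xg [x [Xx <-]] <-]]; exists x.
by case=> x [Xx <-]; apply/Xf; exists (g x); split => //; apply/Xg; exists x.
Qed.

Lemma stabilizes_involutive (T : Type) (X : T -> Prop) (f : T -> T) :
  involutive f -> (forall x, X x -> X (f x)) -> stabilizes X f.
Proof.
move=> fK Xf y; split; last by case=> x [/Xf Xfx <-].
by move=> Xy; exists (f y); split; [apply: Xf | apply: fK].
Qed.

Section Reflections.

Variables (F : fieldType) (m : nat).

Lemma dot_rV (x y : 'rV[F]_3) : (x *m y^T) 0 0 = \sum_j x 0 j * y 0 j.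
Proof. by rewrite !mxE; apply: eq_bigr => j _; rewrite mxE. Qed.

Lemma B_subr_scale (x w u : 'rV[F]_3) c : B m (x - c *: w) u = B m x u - c * B m w u.
Proof. by rewrite /B mulmxBl -scalemxAl !mxE; ring. Qed.

Lemma refl_involutive (u : 'rV[F]_3) : Qf m u != 0 -> involutive (refl m u).
Proof.
move=> Qu0 x; rewrite {2}/refl; set c := 2 * B m x u / Qf m u.
rewrite /refl B_subr_scale -/(Qf m u).
have -> : 2 * (B m x u - c * Qf m u) / Qf m u = - c by rewrite /c; field.
by rewrite scaleNr opprK subrK.
Qed.

Lemma refl_prod_cat (us ws : seq 'rV[F]_3) :
  refl_prod m (us ++ ws) = refl_prod m us \o refl_prod m ws.
Proof. by elim: us => [|u us /= ->]. Qed.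

Definition vec3 (p q r : nat) : 'rV[F]_3 := \row_(i < 3) (nth 0%N [:: p; q; r] i)%:R.

Lemma vec3_dot p q r : (vec3 p q r *m (vec3 p q r)^T) 0 0 = (p * p + q * q + r * r)%:R.
Proof. by rewrite dot_rV !big_ord_recr big_ord0 /= !mxE /= add0r -!natrM -!natrD. Qed.

Lemma vec3_sum p q r : \sum_j vec3 p q r 0 j = (p + q + r)%:R.
Proof. by rewrite !big_ord_recr big_ord0 /= !mxE /= add0r -!natrD. Qed.

Lemma Qf_vec3 p q r : Qf m (vec3 p q r) = Qf m (vec3 1 0 0) * (p * p + q * q + r * r)%:R.
Proof. by rewrite /Qf /B !vec3_dot mulr1. Qed.

End Reflections.

Section SpinorNormGroup.

Variables (F : fieldType) (v : F -> int) (m : nat) (d : 'I_3 -> nat).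
Implicit Types a b s : F.

Lemma theta_OX1 : theta_OX v m d 1.
Proof.
split; first exact: oner_neq0.
exists [::]; split => //; first by move=> y; split; [exists y | case=> x [? <-]].
by exists 1; rewrite oner_neq0 big_nil expr1n mulr1.
Qed.

Lemma theta_OXM a b : theta_OX v m d a -> theta_OX v m d b -> theta_OX v m d (a * b).
Proof.
move=> [a0 [us [Qus evus Xus [s [s0 ea]]]]] [b0 [ws [Qws evws Xws [t [t0 eb]]]]].
split; first exact: mulf_neq0 a0 b0.
exists (us ++ ws); split.
- by rewrite all_cat Qus Qws.
- by rewrite size_cat oddD (negPf evus) (negPf evws).
- by rewrite refl_prod_cat; apply: stabilizes_comp.
- by exists (s * t); rewrite mulf_neq0 // ea eb big_cat /=; split => //; ring.
Qed.

Lemma theta_OX_sqrM s a : s != 0 -> theta_OX v m d a -> theta_OX v m d (s ^+ 2 * a).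
Proof.
move=> s0 [a0 [us [Qus evus Xus [t [t0 ea]]]]].
split; first by rewrite mulf_neq0 ?expf_neq0.
by exists us; split => //; exists (s * t); rewrite mulf_neq0 // ea; split => //; ring.
Qed.

End SpinorNormGroup.

Section Q2Valuation.

Variables (F : fieldType) (v : F -> int).
Hypothesis HF : is_Q2 v.
Implicit Types a c e : F.

Definition val_ge (x : F) (n : int) : Prop := x = 0 \/ n <= v x.

Lemma val1 : v 1 = 0.
Proof.
have := v_mul HF (oner_neq0 F) (oner_neq0 F); rewrite mulr1 => h.
by apply: (@addrI _ (v 1)); rewrite addr0 -h.
Qed.

Lemma valN1 : v (-1) = 0.
Proof.
have hN1 : (-1 : F) != 0 by rewrite oppr_eq0 oner_neq0.
by have := v_mul HF hN1 hN1; rewrite mulrNN mulr1 val1; lia.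
Qed.

Lemma valN (x : F) : x != 0 -> v (- x) = v x.
Proof.
move=> x0; have hN1 : (-1 : F) != 0 by rewrite oppr_eq0 oner_neq0.
by rewrite -mulN1r (v_mul HF hN1 x0) valN1 add0r.
Qed.

Lemma valV (x : F) : x != 0 -> v x^-1 = - v x.
Proof.
move=> x0; have := v_mul HF x0 (_ : x^-1 != 0); rewrite invr_eq0 divff // val1.
by move=> /(_ x0); lia.
Qed.

Lemma val_geW x n k : val_ge x n -> k <= n -> val_ge x k.
Proof. by case=> [->|h] hk; [left | right; lia]. Qed.

Lemma val_geN x n : val_ge x n -> val_ge (- x) n.
Proof.
have [->|x0] := eqVneq x 0; first by rewrite oppr0.
by case=> [/eqP|h]; [rewrite (negPf x0) | right; rewrite valN].
Qed.

Lemma val_geD x y n : val_ge x n -> val_ge y n -> val_ge (x + y) n.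
Proof.
have [->|x0] := eqVneq x 0; first by rewrite add0r.
have [->|y0] := eqVneq y 0; first by rewrite addr0.
have [xy0|xy0] := eqVneq (x + y) 0; first by left.
case=> [/eqP|hx]; first by rewrite (negPf x0).
case=> [/eqP|hy]; first by rewrite (negPf y0).
by right; have := v_add HF x0 y0 xy0; case: (leP (v x) (v y)) => _; lia.
Qed.

Lemma val_geB x y n : val_ge x n -> val_ge y n -> val_ge (x - y) n.
Proof. by move=> hx /val_geN; apply: val_geD. Qed.

Lemma val_geM x y (k l : int) : val_ge x k -> val_ge y l -> val_ge (x * y) (k + l).
Proof.
have [->|x0] := eqVneq x 0; first by rewrite mul0r; left.
have [->|y0] := eqVneq y 0; first by rewrite mulr0; left.
case=> [/eqP|hx]; first by rewrite (negPf x0).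
case=> [/eqP|hy]; first by rewrite (negPf y0).
by right; rewrite (v_mul HF x0 y0); lia.
Qed.

Lemma val_geM0 x y n : val_ge x 0 -> val_ge y n -> val_ge (x * y) n.
Proof. by move=> hx /(val_geM hx); rewrite add0r. Qed.

Lemma val_ge_sum (I : finType) (G : I -> F) n :
  (forall i, val_ge (G i) n) -> val_ge (\sum_i G i) n.
Proof. by move=> hG; apply: (big_ind (val_ge^~ n)) => //; [left | move=> ? ?; apply: val_geD]. Qed.

Lemma val_ge_eq0 x : (forall n, val_ge x n) -> x = 0.
Proof. by move=> hx; case: (hx (v x + 1)) => //; lia. Qed.

Lemma val_ge_nat (k : nat) : val_ge k%:R 0.
Proof.
elim: k => [|k IHk]; first by left.
by rewrite -addn1 natrD; apply: val_geD => //; right; rewrite val1.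
Qed.

Lemma val_ge_int (z : int) : val_ge z%:~R 0.
Proof.
case: z => n; first exact: val_ge_nat.
by rewrite NegzE mulrNz; apply/val_geN/val_ge_nat.
Qed.

Lemma val_ge_expr2 k : val_ge (2 ^+ k) k%:Z.
Proof.
elim: k => [|k IHk]; first by right; rewrite expr0 val1.
rewrite exprS; apply: val_geW (val_geM (_ : val_ge 2 1) IHk) _; last by lia.
by right; rewrite (v_two HF).
Qed.

Lemma val_expr2 k : 2 != 0 :> F -> v (2 ^+ k) = k.
Proof.
move=> h2; elim: k => [|k IHk]; first by rewrite expr0 val1.
by rewrite exprS (v_mul HF h2 (expf_neq0 _ h2)) IHk (v_two HF); lia.
Qed.

Lemma val_ge_dvdz k (z : int) : (2 ^+ k %| z)%Z -> val_ge z%:~R k%:Z.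
Proof.
move=> /divzK <-; rewrite intrM rmorphXn /=.
by apply: val_geM0; [apply: val_ge_int | apply: val_ge_expr2].
Qed.

Lemma not_val_ge1_1 : ~ val_ge 1 1.
Proof. by case=> [/eqP|]; rewrite ?oner_eq0 ?val1. Qed.

Lemma oddz_unit (z : int) : ~~ (2 %| z)%Z -> z%:~R != 0 :> F /\ v z%:~R = 0.
Proof.
move=> z_odd.
have val_ge1 : ~ val_ge (z%:~R : F) 1.
  move=> hz; apply: not_val_ge1_1.
  have -> : 1 = z%:~R - ((z - 1)%:~R : F) by rewrite intrB opprB addrC subrK.
  apply: val_geB hz (val_ge_dvdz (k := 1) _).
  by move: z_odd; rewrite expr1 !dvdzE; lia.
have z0 : z%:~R != 0 :> F by apply: contra_notN val_ge1 => /eqP; left.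
split => //; case: (val_ge_int z) => [/eqP|]; first by rewrite (negPf z0).
by move: val_ge1; rewrite /val_ge; lia.
Qed.

Lemma oddn_unit (k : nat) : odd k -> k%:R != 0 :> F /\ v k%:R = 0.
Proof.
by move=> k_odd; have := @oddz_unit k; rewrite pmulrn dvdzE /= dvdn2 k_odd; apply.
Qed.

Lemma val_ge_inv_unit x : x != 0 -> v x = 0 -> val_ge x^-1 0.
Proof. by move=> x0 vx; right; rewrite valV // vx. Qed.

Lemma val_ge_inv_oddn (k : nat) : odd k -> val_ge k%:R^-1 0.
Proof. by move=> /oddn_unit [k0 vk]; apply: val_ge_inv_unit. Qed.

Lemma unit_not_val_ge1 (x : F) : x != 0 -> v x = 0 -> ~ val_ge x 1.
Proof. by move=> x0 vx [/eqP|]; rewrite ?(negPf x0) ?vx. Qed.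

Lemma unit_near (x y : F) : x != 0 -> v x = 0 -> val_ge (y - x) 1 -> y != 0 /\ v y = 0.
Proof.
move=> x0 vx hyx.
have hy : val_ge y 0.
  by rewrite -(subrK x y); apply: val_geD (val_geW hyx _) _ => //; right; rewrite vx.
have hy1 : ~ val_ge y 1.
  move=> hy1; apply: (unit_not_val_ge1 x0 vx).
  have -> : x = y - (y - x) by rewrite opprB addrC subrK.
  exact: val_geB.
have y0 : y != 0 by apply: contra_notN hy1 => /eqP; left.
by split => //; case: hy => [/eqP|]; rewrite ?(negPf y0) //; move: hy1; rewrite /val_ge; lia.
Qed.

Lemma ratr_unit_odd (q : rat) :
  ratr q != 0 :> F -> v (ratr q) = 0 -> ~~ (2 %| numq q)%Z /\ ~~ (2 %| denq q)%Z.
Proof.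
move=> q0 vq; have q_unit := unit_not_val_ge1 q0 vq; move: q0 vq q_unit.
rewrite /ratr; set n := numq q; set d := denq q => q0 vq q_unit.
have d0 : d%:~R != 0 :> F by apply: contraNneq q0 => ->; rewrite invr0 mulr0.
have not_both_even : ~~ ((2 %| n)%Z && (2 %| d)%Z).
  apply/negP => /andP []; rewrite !dvdzE /= => hn hd.
  have := coprime_num_den q; rewrite /coprime => /eqP g1.
  by have := dvdn_gcd 2 `|n| `|d|; rewrite g1 hn hd.
have [d_even|d_odd] := boolP (2 %| d)%Z.
  have n_odd : ~~ (2 %| n)%Z by move: not_both_even; rewrite d_even andbT.
  have [n0 vn] := oddz_unit n_odd; exfalso; apply: (unit_not_val_ge1 n0 vn).
  rewrite -(divfK d0 n%:~R); apply: val_geM0 (val_ge_dvdz (k := 1) d_even).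
  by right; rewrite vq.
have [_ vd] := oddz_unit d_odd; split=> //; apply/negP => n_even; apply: q_unit.
by rewrite mulrC; apply: val_geM0 (val_ge_inv_unit d0 vd) (val_ge_dvdz (k := 1) n_even).
Qed.

Lemma oddz_mod8 (n d : int) : ~~ (2 %| n)%Z -> ~~ (2 %| d)%Z ->
  exists2 r : nat, r \in [:: 1; 3; 5; 15]%N & (2 ^+ 3 %| n - r%:Z * d)%Z.
Proof.
move=> hn hd; have -> : (2 ^+ 3 : int) = 8 by [].
have : [|| 8 %| n - 1%:Z * d, 8 %| n - 3%:Z * d, 8 %| n - 5%:Z * d | 8 %| n - 15%:Z * d]%Z.
  by lia.
by case/or4P => h; [exists 1%N | exists 3%N | exists 5%N | exists 15%N].
Qed.

Lemma unit_mod8 e : e != 0 -> v e = 0 ->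
  exists2 r : nat, r \in [:: 1; 3; 5; 15]%N & val_ge (e - r%:R) 3.
Proof.
move=> e0 ve; have [q hq] := v_dense HF e 3.
have [q0 vq] : ratr q != 0 :> F /\ v (ratr q) = 0.
  by apply: (unit_near (y := ratr q) e0 ve); rewrite -opprB; apply/val_geN/(val_geW hq).
have [n_odd d_odd] := ratr_unit_odd q0 vq.
have [d0 vd] := oddz_unit d_odd.
have [r hr h8] := oddz_mod8 n_odd d_odd; exists r => //.
have -> : e - r%:R = (e - ratr q) + (numq q - r%:Z * denq q)%:~R / (denq q)%:~R.
  by rewrite /ratr intrB intrM mulrBl mulfK // addrA subrK.
apply: val_geD hq _; rewrite mulrC; apply: val_geM0 (val_ge_inv_unit d0 vd) _.
exact: val_ge_dvdz.
Qed.

Lemma val_ge_limit (z : nat -> F) :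
  (forall n, val_ge (z n.+1 - z n) n) ->
  exists l, forall n : int, exists N, forall i, (N <= i)%N -> val_ge (z i - l) n.
Proof.
move=> hz.
have tail i k : val_ge (z (i + k)%N - z i) i.
  elim: k => [|k IHk]; first by rewrite addn0 subrr; left.
  rewrite addnS -(subrK (z (i + k)%N) (z (i + k).+1)) -addrA.
  by apply: val_geD (val_geW (hz _) _) IHk; lia.
apply: (v_complete HF) => n; exists `|n|%N => i j hi hj.
wlog le_ij : i j hi hj / (i <= j)%N => [wlog_ij|].
  have [/(wlog_ij i j hi hj)//|/ltnW] := leqP i j.
  by move=> /(wlog_ij j i hj hi) /val_geN; rewrite opprB.
rewrite -(subnKC le_ij) -opprB; apply/val_geN/(val_geW (tail _ _)); lia.
Qed.

Lemma root_add_2sqr y : val_ge y 0 -> exists2 l, val_ge l 0 & l + 2 * l ^+ 2 = y.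
Proof.
move=> hy; pose z n := iter n (fun t => y - 2 * t ^+ 2) 0.
have two_int : val_ge 2 0 by right; rewrite (v_two HF).
have z_int n : val_ge (z n) 0.
  elim: n => [|n IHn]; first by left.
  by apply: val_geB hy (val_geM0 two_int (val_geM IHn IHn)).
have z_step n : val_ge (z n.+1 - z n) n.
  elim: n => [|n IHn]; first by rewrite /= expr0n mulr0 !subr0.
  have -> : z n.+2 - z n.+1 = - (2 * ((z n.+1 - z n) * (z n.+1 + z n))) by rewrite /=; ring.
  apply/val_geN/(val_geW (val_geM (val_ge_expr2 1) (val_geM IHn (val_geD (z_int _) (z_int _))))).
  by lia.
have [l hl] := val_ge_limit z_step.
have l_int : val_ge l 0.
  have [N hN] := hl 0; rewrite -(subrK (z N) l) -opprB.
  exact: val_geD (val_geN (hN N (leqnn N))) (z_int N).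
exists l => //; apply/eqP; rewrite -subr_eq0; apply/eqP/val_ge_eq0 => n.
have [N hN] := hl n.
have -> : l + 2 * l ^+ 2 - y = - (z N.+1 - l) - 2 * ((z N - l) * (z N + l)) by rewrite /=; ring.
apply: val_geB; first exact/val_geN/hN.
apply: val_geM0 two_int (val_geW (val_geM (hN N (leqnn N)) (val_geD (z_int _) l_int)) _).
by lia.
Qed.

Lemma sqr_of_val_ge3 c : 2 != 0 :> F -> val_ge (c - 1) 3 -> exists2 t, t != 0 & c = t ^+ 2.
Proof.
move=> h2 hc.
have e8 : 8 = 2 ^+ 3 :> F by rewrite -natrX.
have h8 : 8 != 0 :> F by rewrite e8 expf_neq0.
have hy : val_ge ((c - 1) / 8) 0.
  have h8i : val_ge 8^-1 (-3) by right; rewrite valV // e8 val_expr2.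
  exact: val_geW (val_geM hc h8i) _.
have [l l_int l_root] := root_add_2sqr hy.
exists (1 + 4 * l).
  apply: contra_notN not_val_ge1_1 => /eqP t0; rewrite -[1]subr0 -t0 opprD addNKr.
  have e4 : 4 = 2 ^+ 2 :> F by rewrite -natrX.
  by rewrite e4; apply/val_geN/(val_geW (val_geM (val_ge_expr2 2) l_int)).
have -> : c = 1 + 8 * ((c - 1) / 8) by rewrite mulrC divfK // addrC subrK.
by rewrite -l_root; ring.
Qed.

Lemma char2_intr01 (z : int) : 2 = 0 :> F -> z%:~R = 0 :> F \/ z%:~R = 1 :> F.
Proof.
move=> h2; rewrite (divz_eq z 2) intrD intrM (_ : 2%:~R = 2) // h2 mulr0 add0r.
have : (z %% 2)%Z = 0 \/ (z %% 2)%Z = 1 by lia.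
by case=> ->; [left | right].
Qed.

(* [is_Q2] constrains [v] only on nonzero elements, so it allows [2 = 0]; density then forces
   [F] to be the field with two elements. *)
Lemma char2_eq1 a : 2 = 0 :> F -> a != 0 -> a = 1.
Proof.
move=> h2 a0; have [//|a1] := eqVneq a 1; exfalso.
have a1' : a - 1 != 0 by rewrite subr_eq0.
set n := Num.max (v a) (v (a - 1)) + 1.
have lt_a : v a < n by rewrite ltzD1 le_max lexx.
have lt_a1 : v (a - 1) < n by rewrite ltzD1 le_max lexx orbT.
have [q hq] := v_dense HF a n.
have : ratr q = 0 :> F \/ ratr q = 1 :> F.
  rewrite /ratr; case: (char2_intr01 (numq q) h2) => ->; first by left; rewrite mul0r.
  by case: (char2_intr01 (denq q) h2) => ->; [left; rewrite invr0 mulr0 | right; rewrite invr1 mulr1].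
case=> hr; move: hq; rewrite hr ?subr0 => -[/eqP|]; rewrite ?(negPf a0) ?(negPf a1') //.
  by move=> /(lt_le_trans lt_a); rewrite ltxx.
by move=> /(lt_le_trans lt_a1); rewrite ltxx.
Qed.

Section NuCoset.

Variables (m : nat) (d : 'I_3 -> nat).
Hypothesis d_odd : forall i, odd (d i).

Definition in_nuZ2 (x : 'rV[F]_3) : Prop := forall i, val_ge (x 0 i - nu0 F m) 0.

Lemma inX2_nuZ2 x : inX2 v m d x <-> in_nuZ2 x.
Proof.
split=> [Xx i | hx i].
  have [a [a_int ->]] := Xx i; rewrite addrK.
  exact: val_geM0 a_int (val_ge_nat _).
have [d0 _] := oddn_unit (d_odd i).
exists ((x 0 i - nu0 F m) / (d i)%:R); split; last by rewrite divfK // subrK.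
by rewrite mulrC; apply: val_geM0 (val_ge_inv_oddn (d_odd i)) (hx i).
Qed.

Definition refl_stable (u : 'rV[F]_3) : Prop :=
  Qf m u != 0 /\ forall x, in_nuZ2 x -> in_nuZ2 (refl m u x).

Lemma refl_stable_integral (u : 'rV[F]_3) :
  4 * (m%:R - 2) ^+ 2 != 0 :> F -> val_ge (2 * nu0 F m) 0 ->
  (forall i, val_ge (u 0 i) 0) -> (u *m u^T) 0 0 != 0 ->
  val_ge (2 / (u *m u^T) 0 0) 0 -> val_ge ((\sum_j u 0 j) / (u *m u^T) 0 0) 0 ->
  refl_stable u.
Proof.
set K := 4 * _; set n := (u *m u^T) 0 0 => K0 nu_int u_int n0 two_n sum_n.
have Qu : Qf m u = K * n by [].
split=> [|x hx i]; first by rewrite Qu mulf_neq0.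
set nu := nu0 F m in nu_int hx *.
have -> : refl m u x 0 i - nu = (x 0 i - nu)
    - ((\sum_j (x 0 j - nu) * u 0 j) * (2 / n) * u 0 i + 2 * nu * ((\sum_j u 0 j) / n) * u 0 i).
  rewrite /refl !mxE Qu /B dot_rV -/K.
  have -> : \sum_j x 0 j * u 0 j = \sum_j (x 0 j - nu) * u 0 j + nu * \sum_j u 0 j.
    by rewrite mulr_sumr -big_split; apply: eq_bigr => j _ /=; ring.
  by field; apply/andP.
apply: val_geB (hx i) (val_geD _ _); rewrite mulrC; apply: val_geM0 (u_int i) _.
  rewrite mulrC; apply: val_geM0 two_n (val_ge_sum _) => j.
  by rewrite mulrC; apply: val_geM0 (u_int j) (hx j).
exact: val_geM0 nu_int sum_n.
Qed.

Lemma stabilizes_refl u : refl_stable u -> stabilizes (inX2 v m d) (refl m u).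
Proof.
move=> [Qu0 hu]; apply: stabilizes_involutive (refl_involutive Qu0) _ => x.
by move=> /inX2_nuZ2 /hu /inX2_nuZ2.
Qed.

Lemma theta_OX_pair (u w : 'rV[F]_3) (n : F) :
  refl_stable u -> refl_stable w -> Qf m w = Qf m u * n -> n != 0 -> theta_OX v m d n.
Proof.
move=> su sw Qw n0; have [Qu0 _] := su; have [Qw0 _] := sw.
split => //; exists [:: u; w]; split.
- by rewrite /= Qu0 Qw0.
- by [].
- exact: stabilizes_comp (stabilizes_refl su) (stabilizes_refl sw).
- by exists (Qf m u)^-1; rewrite invr_eq0 Qu0 !big_cons big_nil Qw; split => //; field.
Qed.

Hypotheses (two_neq0 : 2 != 0 :> F) (m_ge3 : (2 < m)%N) (m_odd : odd m).

Let m2_odd : odd (m - 2). Proof. by rewrite oddB ?m_odd // ltnW. Qed.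

Let natr_m2 : m%:R - 2 = (m - 2)%:R :> F. Proof. by rewrite natrB // ltnW. Qed.

Lemma val_ge_2nu : val_ge (2 * nu0 F m) 0.
Proof.
have [m2_0 _] := oddn_unit m2_odd.
have -> : 2 * nu0 F m = (4%:Z - m%:Z)%:~R * (m - 2)%:R^-1.
  by rewrite /nu0 natr_m2; field; apply/andP.
exact: val_geM0 (val_ge_int _) (val_ge_inv_oddn m2_odd).
Qed.

Lemma Qf_scale_neq0 : 4 * (m%:R - 2) ^+ 2 != 0 :> F.
Proof.
have [m2_0 _] := oddn_unit m2_odd.
by rewrite natr_m2 mulf_neq0 ?expf_neq0 // (_ : 4 = 2 ^+ 2) ?expf_neq0 // -natrX.
Qed.

Lemma refl_stable_vec3 p q r : let n := (p * p + q * q + r * r)%:R in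
  n != 0 -> val_ge (2 / n) 0 -> val_ge ((p + q + r)%:R / n) 0 -> refl_stable (vec3 F p q r).
Proof.
move=> n n0 two_n sum_n.
apply: refl_stable_integral Qf_scale_neq0 val_ge_2nu _ _ _ _; rewrite ?vec3_dot ?vec3_sum //.
by move=> i; rewrite mxE; apply: val_ge_nat.
Qed.

Lemma refl_stable_vec3_odd p q r : odd (p * p + q * q + r * r) -> refl_stable (vec3 F p q r).
Proof.
move=> n_odd; have [n0 _] := oddn_unit n_odd; have n_inv := val_ge_inv_oddn n_odd.
by apply: refl_stable_vec3; rewrite // mulrC; apply: val_geM0 n_inv (val_ge_nat _).
Qed.

Lemma theta_OX_sum3sq p q r : refl_stable (vec3 F p q r) -> theta_OX v m d (p * p + q * q + r * r)%:R.
Proof.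
move=> su; have [Q0 _] := su; move: Q0; rewrite Qf_vec3 mulf_eq0 negb_or => /andP [_ n0].
exact: theta_OX_pair (@refl_stable_vec3_odd 1 0 0 isT) su (@Qf_vec3 F m p q r) n0.
Qed.

Lemma theta_OX_2 : theta_OX v m d 2.
Proof.
have n2 : (1 * 1 + 1 * 1 + 0 * 0)%:R = 2 :> F by [].
have two_div2_int : val_ge (2 / 2) 0 by rewrite divff //; right; rewrite val1.
by rewrite -n2; apply/theta_OX_sum3sq/refl_stable_vec3; rewrite n2.
Qed.

Lemma theta_OX_residue (r : nat) : r \in [:: 1; 3; 5; 15]%N -> theta_OX v m d r%:R.
Proof.
have t3 : theta_OX v m d 3%:R by apply/(@theta_OX_sum3sq 1 1 1)/refl_stable_vec3_odd.
have t5 : theta_OX v m d 5%:R by apply/(@theta_OX_sum3sq 1 2 0)/refl_stable_vec3_odd.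
rewrite !inE => /or4P [] /eqP -> //; first exact: theta_OX1.
by rewrite (natrM F 3 5); apply: theta_OXM.
Qed.

Lemma theta_OX_unit e : e != 0 -> v e = 0 -> theta_OX v m d e.
Proof.
move=> e0 ve; have [r r_res er] := unit_mod8 e0 ve.
have r_odd : odd r by move: r_res; rewrite !inE => /or4P [] /eqP ->.
have [r0 _] := oddn_unit r_odd.
have [t t0 et] : exists2 t, t != 0 & e / r%:R = t ^+ 2.
  apply: sqr_of_val_ge3 two_neq0 _.
  have -> : e / r%:R - 1 = r%:R^-1 * (e - r%:R) by rewrite mulrBr mulVf // mulrC.
  exact: val_geM0 (val_ge_inv_oddn r_odd) er.
by rewrite -(divfK r0 e) et; apply/theta_OX_sqrM/theta_OX_residue.
Qed.

Lemma theta_OX_val_nat (n : nat) a : a != 0 -> v a = n -> theta_OX v m d a.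
Proof.
elim: n a => [|n IHn] a a0 va; first exact: theta_OX_unit.
rewrite -(divfK two_neq0 a) mulrC; apply: theta_OXM theta_OX_2 (IHn _ _ _).
  by rewrite mulf_neq0 ?invr_eq0.
by rewrite (v_mul HF a0) ?invr_eq0 // valV // (v_two HF) va; lia.
Qed.

Lemma theta_OX_neq0 a : a != 0 -> theta_OX v m d a.
Proof.
move=> a0; case va: (v a) => [n|n]; first exact: theta_OX_val_nat va.
have ai0 : a^-1 != 0 by rewrite invr_eq0.
have vai : v a^-1 = n.+1 by rewrite valV // va NegzE opprK.
have -> : a = a ^+ 2 * a^-1 by rewrite expr2 -mulrA divff ?mulr1.
exact: theta_OX_sqrM a0 (theta_OX_val_nat ai0 vai).
Qed.

End NuCoset.

Lemma Z2_sq_neq0 a : a != 0 -> Z2_sq v a.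
Proof.
move=> a0; have [va|va] := leP 0 (v a).
  by exists a, 1; rewrite oner_neq0 expr1n mulr1; split => //; right.
exists a^-1, a; rewrite invr_eq0 expr2 mulrA mulVf // mul1r; split => //.
by right; rewrite valV //; lia.
Qed.

End Q2Valuation.

Theorem proposition4p2 (F : fieldType) (v : F -> int) (HF : is_Q2 v)
    (m : nat) (d : 'I_3 -> nat) :
  (3 <= m)%N -> odd m -> (forall i, odd (d i) /\ squarefree (d i)) ->
  forall a : F, theta_OX v m d a <-> Z2_sq v a.
Proof.
move=> m_ge3 m_odd hd a; split=> [[a0 _]|[b [s [_ b0 s0 ->]]]]; first exact: Z2_sq_neq0.
have a0 : b * s ^+ 2 != 0 by rewrite mulf_neq0 ?expf_neq0.
have [two0|two_neq0] := eqVneq (2 : F) 0.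
  by rewrite (char2_eq1 HF two0 a0); apply: theta_OX1.
by apply: theta_OX_neq0 => // i; case: (hd i).
Qed.
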